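(* Let $f:\mathbb{R}^n\to\mathbb{R}\cup\{+\infty\}$ be a closed proper convex function, $A\in\mathbb{R}^{m\times n}$, $b\in\mathbb{R}^m$, with $\mathrm{ri}(\mathrm{dom}\,f)\cap\mathrm{im}(A)\neq\emptyset$, and consider the problem $\min_x f(x)$ subject to $Ax=b$, with Lagrangian $L(x,\lambda)=f(x)-\langle\lambda,Ax-b\rangle$. Let $(x^*,\lambda^* )$ be a saddle point of $L$ (i.e. $L(x^*,\lambda)\leqslant L(x^*,\lambda^* )\leqslant L(x,\lambda^* )$ for all $x,\lambda$). Let $H\in\mathbb{R}^{m\times m}$ be symmetric positive definite and $(A_k),(a_k),(b_k),(c_k)$ be real sequences with $a_k>0$, $c_k>0$ for all $k$, $b_k>0$ for $k\geqslant1$, satisfying $$A_{k+1}-A_k\leqslant a_k,\quad A_k=a_kb_k,\quad A_0=b_0=0,\quad c_k\geqslant a_k.$$ Let $\lambda_0\in\mathbb{R}^m$, $z_0=\lambda_0$, and for $k\geqslant0$ $$\tilde\lambda_{k+1}=\frac{1}{b_k+1}z_k+\frac{b_k}{b_k+1}\lambda_k,\qquad x_{k+1}\in\arg\min_x\Big\{f(x)-\langle\tilde\lambda_{k+1},Ax-b\rangle+\frac{c_k}{2(b_k+1)}\|Ax-b\|_H^2\Big\},$$ $$\lambda_{k+1}=\tilde\lambda_{k+1}-\frac{c_k}{b_k+1}H(Ax_{k+1}-b),\qquad z_{k+1}=z_k-a_kH(Ax_{k+1}-b),$$ where the minimizers are assumed to exist. Then for every $k\geqslant1$, $$f(x^*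 )-f(x_k)+\langle\lambda_k,Ax_k-b\rangle\leqslant\frac{\|\lambda_0-\lambda^*\|^2_{H^{-1}}}{2A_k},$$ and for every $k\geqslant0$, $$\min_{0\leqslant j\leqslant k}\|Ax_{j+1}-b\|_H^2\leqslant\frac{\|\lambda_0-\lambda^*\|^2_{H^{-1}}}{\sum_{j=0}^ka_j^2}.$$
   Context: $\|u\|_M^2=u^{\mathrm T}Mu$ for a symmetric positive definite matrix $M$; $\mathrm{ri}$ denotes relative interior and $\mathrm{im}(A)$ the range of $A$. *)

From HB Require Import structures.
From mathcomp Require Import all_boot all_order all_algebra.
From mathcomp Require Import reals constructive_ereal.
Set Implicit Arguments. Unset Strict Implicit. Unset Printing Implicit Defensive.
Import Order.TTheory GRing.Theory Num.Theory.
Local Open Scope ring_scope.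

Section Defs.
Variable R : realType.

Definition inner {m : nat} (u v : 'cV[R]_m) : R := (u^T *m v) 0 0.

Definition mnorm2 {m : nat} (M : 'M[R]_m) (u : 'cV[R]_m) : R := (u^T *m M *m u) 0 0.

Definition spd {m : nat} (M : 'M[R]_m) : Prop :=
  M^T = M /\ forall u : 'cV[R]_m, u != 0 -> 0 < mnorm2 M u.

Definition dom {n : nat} (f : 'cV[R]_n -> \bar R) : 'cV[R]_n -> Prop :=
  fun x => (f x < +oo)%E.

Definition aff_hull {n : nat} (S : 'cV[R]_n -> Prop) : 'cV[R]_n -> Prop :=
  fun y => exists (k : nat) (p : 'I_k -> 'cV[R]_n) (w : 'I_k -> R),
    (forall i, S (p i)) /\ \sum_(i < k) w i = 1 /\ y = \sum_(i < k) w i *: p i.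

Definition rel_int {n : nat} (S : 'cV[R]_n -> Prop) : 'cV[R]_n -> Prop :=
  fun x => S x /\ exists eps : R, 0 < eps /\
    forall y, aff_hull S y -> inner (y - x) (y - x) < eps -> S y.

Definition proper_fun {n : nat} (f : 'cV[R]_n -> \bar R) : Prop :=
  (forall x, f x != -oo%E) /\ exists x, (f x < +oo)%E.

(* convex (for extended-real-valued functions not taking -oo) *)
Definition convex_fun {n : nat} (f : 'cV[R]_n -> \bar R) : Prop :=
  forall (x y : 'cV[R]_n) (t : R), 0 < t < 1 ->
    (f (t *: x + (1 - t) *: y)%R <= t%:E * f x + (1 - t)%:E * f y)%E.

(* closed = lower semicontinuous (Euclidean topology) *)
Definition closed_fun {n : nat} (f : 'cV[R]_n -> \bar R) : Prop :=
  forall (x : 'cV[R]_n) (alpha : R), (alpha%:E < f x)%E ->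
    exists delta : R, 0 < delta /\
      forall y, inner (y - x) (y - x) < delta -> (alpha%:E < f y)%E.

Definition lagrangian {m n : nat} (f : 'cV[R]_n -> \bar R) (A : 'M[R]_(m, n))
  (b : 'cV[R]_m) (x : 'cV[R]_n) (lam : 'cV[R]_m) : \bar R :=
  (f x - (inner lam (A *m x - b)%R)%:E)%E.

Definition saddle_point {m n : nat} (f : 'cV[R]_n -> \bar R) (A : 'M[R]_(m, n))
  (b : 'cV[R]_m) (xs : 'cV[R]_n) (ls : 'cV[R]_m) : Prop :=
  (forall lam, (lagrangian f A b xs lam <= lagrangian f A b xs ls)%E) /\
  (forall x, (lagrangian f A b xs ls <= lagrangian f A b x ls)%E).

End Defs.

From HB Require Import structures.
From mathcomp Require Import all_boot all_order all_algebra.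
From mathcomp Require Import reals constructive_ereal.
From mathcomp Require Import ring lra.
Import Order.TTheory GRing.Theory Num.Theory.
Local Open Scope ring_scope.

(* Both estimates come from the Lyapunov energy
     E_k = A_k (f(xs) - L(x_k, lam_k)) + 1/2 ||z_k - ls||^2_{H^-1}.
   The optimality condition of the x-subproblem says that A^T lam_{k+1} is a
   subgradient of f at x_{k+1}.  With the saddle-point inequality this bounds
   the gap at step k+1 both by the gap at step k plus
   <lam_{k+1} - lam_k, A x_{k+1} - b> and by
   <lam_{k+1} - ls, A x_{k+1} - b>.  Combining the two bounds with
   weights a_k b_k and a_k, and using A_{k+1} <= a_k (b_k + 1) and c_k >= a_k,
   yields E_{k+1} + a_k^2/2 ||A x_{k+1} - b||^2_H <= E_k, which telescopes. *)

Set Implicit Arguments. Unset Strict Implicit. Unset Printing Implicit Defensive.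

Section InnerProduct.
Variables (R : realType) (m : nat).
Implicit Types (u v w : 'cV[R]_m) (M : 'M[R]_m).

Lemma innerDl u v w : inner (u + v) w = inner u w + inner v w.
Proof. by rewrite /inner linearD /= mulmxDl mxE. Qed.

Lemma innerBl u v w : inner (u - v) w = inner u w - inner v w.
Proof. by rewrite /inner linearB /= mulmxBl !mxE. Qed.

Lemma innerDr u v w : inner w (u + v) = inner w u + inner w v.
Proof. by rewrite /inner mulmxDr mxE. Qed.

Lemma innerBr u v w : inner w (u - v) = inner w u - inner w v.
Proof. by rewrite /inner mulmxBr !mxE. Qed.

Lemma innerZl a u w : inner (a *: u) w = a * inner u w.
Proof. by rewrite /inner linearZ /= -scalemxAl mxE. Qed.

Lemma innerZr a u w : inner w (a *: u) = a * inner w u.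
Proof. by rewrite /inner -scalemxAr mxE. Qed.

Lemma innerNr u w : inner w (- u) = - inner w u.
Proof. by rewrite -scaleN1r innerZr mulN1r. Qed.

Lemma inner0r u : inner u 0 = 0.
Proof. by rewrite /inner mulmx0 mxE. Qed.

Lemma innerC u w : inner u w = inner w u.
Proof. by rewrite /inner -[u^T *m w]trmxK trmx_mul trmxK mxE. Qed.

Lemma inner_mulmxr M u w : inner u (M *m w) = inner (M^T *m u) w.
Proof. by rewrite /inner trmx_mul trmxK mulmxA. Qed.

Lemma mnorm2E M u : mnorm2 M u = inner u (M *m u).
Proof. by rewrite /mnorm2 /inner mulmxA. Qed.

Lemma inner_self_le0 u : inner u u <= 0 -> u = 0.
Proof.
rewrite /inner mxE => u2_le0.
have sq_ge0 (i : 'I_m) : 0 <= u i 0 * u i 0 by rewrite -expr2 sqr_ge0.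
have /psumr_eq0P u2_eq0 : \sum_(i < m) u i 0 * u i 0 = 0.
  apply/eqP; rewrite eq_le sumr_ge0 // andbT.
  by move: u2_le0; under eq_bigr do rewrite mxE.
apply/matrixP => i j; rewrite (ord1 j) mxE.
by apply/eqP; rewrite -[_ == 0]orbb -mulf_eq0 u2_eq0.
Qed.

Lemma mnorm2DZ M u v t : M^T = M ->
  mnorm2 M (u + t *: v) = mnorm2 M u + 2 * t * inner v (M *m u) + t ^+ 2 * mnorm2 M v.
Proof.
move=> M_sym; rewrite !mnorm2E mulmxDr -scalemxAr !innerDl !innerDr !innerZl !innerZr.
by rewrite [inner u (M *m v)]inner_mulmxr M_sym (innerC (M *m u)); ring.
Qed.

End InnerProduct.

Section PositiveDefinite.
Variables (R : realType) (m : nat).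
Implicit Types (u w g : 'cV[R]_m) (M : 'M[R]_m).

Lemma spd_mnorm2_ge0 M u : spd M -> 0 <= mnorm2 M u.
Proof.
move=> [_ M_pos]; have [->|u_neq0] := eqVneq u 0; last exact/ltW/M_pos.
by rewrite /mnorm2 mulmx0 mxE.
Qed.

Lemma spd_unitmx M : spd M -> M \in unitmx.
Proof.
move=> [_ M_pos]; rewrite unitmxE unitfE; apply/negP => /det0P [v v_neq0 vM0].
have vT_neq0 : v^T != 0 by rewrite -trmx0 (inj_eq trmx_inj).
by have := M_pos _ vT_neq0; rewrite /mnorm2 trmxK vM0 mul0mx mxE ltxx.
Qed.

Lemma spd_invmx_mnorm2_ge0 M u : spd M -> 0 <= mnorm2 (invmx M) u.
Proof.
move=> M_spd; have M_unit := spd_unitmx M_spd.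
rewrite -[u](mulKVmx M_unit) mnorm2E mulKmx // innerC -mnorm2E.
exact: spd_mnorm2_ge0.
Qed.

Lemma mnorm2_invmx_subZ M w g a : M^T = M -> M \in unitmx ->
  mnorm2 (invmx M) (w - a *: (M *m g))
  = mnorm2 (invmx M) w - 2 * a * inner w g + a ^+ 2 * mnorm2 M g.
Proof.
move=> M_sym M_unit.
rewrite !mnorm2E mulmxBr -scalemxAr mulKmx // !innerBl !innerBr !innerZl !innerZr.
rewrite [inner (M *m g) _]innerC inner_mulmxr M_sym mulKVmx // (innerC (M *m g)).
ring.
Qed.

End PositiveDefinite.

Section PenalizedArgmin.
Variable R : realType.

Lemma ge0_linear_perturbation (D K : R) :
  (forall t, 0 < t < 1 -> 0 <= D + t * K) -> 0 <= D.
Proof.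
move=> DK_ge0; rewrite leNgt; apply/negP => D_lt0.
have K_le := ler_norm K; have K_ge := normr_ge0 K.
pose t := - D / (2 * (`|K| + 1 - D)).
have t_gt0 : 0 < t by rewrite divr_gt0 //; lra.
have tE : t * (2 * (`|K| + 1 - D)) = - D by rewrite mulfVK // gt_eqF //; lra.
have t_lt1 : t < 1 by nra.
have := DK_ge0 t; rewrite t_gt0 t_lt1 => /(_ isT).
have : t * K <= t * `|K| by rewrite ler_pM2l.
nra.
Qed.

Variables (m n : nat) (f : 'cV[R]_n -> \bar R) (A : 'M[R]_(m, n)) (b : 'cV[R]_m).

(* Compare x' with t y + (1 - t) x' and let t -> 0. *)
Lemma penalized_argmin_optimality (H : 'M[R]_m) (l : 'cV[R]_m) (beta : R)
    (x' y : 'cV[R]_n) (Fx Fy : R) :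
  convex_fun f -> (forall y, f y != -oo%E) -> H^T = H ->
  f x' = Fx%:E -> f y = Fy%:E ->
  (forall v, (f x' - (inner l (A *m x' - b))%:E + (beta * mnorm2 H (A *m x' - b))%:E
     <= f v - (inner l (A *m v - b))%:E + (beta * mnorm2 H (A *m v - b))%:E)%E) ->
  Fx + inner (l - (2 * beta) *: (H *m (A *m x' - b))) (A *m y - A *m x') <= Fy.
Proof.
move=> f_convex f_ninfty H_sym fx'E fyE x'_argmin.
set r := A *m x' - b; set d := A *m y - A *m x'.
rewrite innerBl innerZl [inner (H *m r) d]innerC.
suff : 0 <= Fy - Fx - inner l d + 2 * beta * inner d (H *m r) by lra.
apply: (@ge0_linear_perturbation _ (beta * mnorm2 H d)) => t /[dup] t01 /andP [t_gt0 _].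
pose yt := t *: y + (1 - t) *: x'.
have := f_convex y x' t t01; rewrite -/yt fx'E fyE -!EFinM -EFinD => yt_convex.
have fyt_fin : f yt \is a fin_num.
  rewrite fin_numE f_ninfty /=; apply: contraTneq yt_convex => ->.
  by rewrite leye_eq.
have fytE := esym (fineK fyt_fin); rewrite fytE lee_fin in yt_convex.
have rtE : A *m yt - b = r + t *: d.
  rewrite /yt mulmxDr -!scalemxAr /r /d.
  by apply/matrixP => i j; rewrite !mxE; ring.
have := x'_argmin yt.
rewrite fytE fx'E rtE -/r mnorm2DZ // [inner l (r + _)]innerDr innerZr.
rewrite -!EFinB -!EFinD lee_fin => yt_ge.
suff : 0 <= t * (Fy - Fx - inner l d + 2 * beta * inner d (H *m r)
                 + t * (beta * mnorm2 H d)).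
  by rewrite pmulr_rge0.
nra.
Qed.

End PenalizedArgmin.

Lemma exists_le_weighted_mean (R : realType) (w G : nat -> R) (C : R) k :
  (forall i, 0 < w i) -> \sum_(0 <= i < k.+1) w i * G i <= C ->
  exists j, (j <= k)%N /\ G j <= C / \sum_(0 <= i < k.+1) w i.
Proof.
move=> w_gt0; rewrite !big_mkord => sum_le.
have [j _ j_min] := @arg_minP _ R 'I_k.+1 ord0 xpredT (fun i => G i) isT.
exists j; split; first by rewrite -ltnS.
have sum_gt0 : 0 < \sum_(i < k.+1) w i.
  by rewrite big_ord_recl ltr_pwDl ?sumr_ge0 // => i _; exact/ltW.
rewrite ler_pdivlMr // mulr_sumr; apply: le_trans sum_le.
by apply: ler_sum => i _; rewrite mulrC ler_wpM2l ?j_min // ltW.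
Qed.

Section AcceleratedLagrangian.
Variables (R : realType) (m n : nat).
Variables (f : 'cV[R]_n -> \bar R) (A : 'M[R]_(m, n)) (b : 'cV[R]_m).
Variables (xs : 'cV[R]_n) (ls : 'cV[R]_m) (H : 'M[R]_m).
Variables (Aseq aseq bseq cseq : nat -> R).
Variables (x : nat -> 'cV[R]_n) (lam z lamt : nat -> 'cV[R]_m).

Hypothesis f_proper : proper_fun f.
Hypothesis f_convex : convex_fun f.
Hypothesis saddle : saddle_point f A b xs ls.
Hypothesis H_spd : spd H.
Hypothesis aseq_gt0 : forall k, 0 < aseq k.
Hypothesis bseq_gt0 : forall k, (1 <= k)%N -> 0 < bseq k.
Hypothesis Aseq_succ_le : forall k, Aseq k.+1 - Aseq k <= aseq k.
Hypothesis AseqE : forall k, Aseq k = aseq k * bseq k.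
Hypothesis bseq0 : bseq 0 = 0.
Hypothesis aseq_le_cseq : forall k, aseq k <= cseq k.
Hypothesis z0 : z 0 = lam 0.
Hypothesis lamtE :
  forall k, lamt k.+1 = (bseq k + 1)^-1 *: z k + (bseq k / (bseq k + 1)) *: lam k.
Hypothesis x_argmin : forall k (y : 'cV[R]_n),
  (f (x k.+1) - (inner (lamt k.+1) (A *m x k.+1 - b))%:E
     + (cseq k / (2 * (bseq k + 1)) * mnorm2 H (A *m x k.+1 - b))%:E
   <= f y - (inner (lamt k.+1) (A *m y - b))%:E
     + (cseq k / (2 * (bseq k + 1)) * mnorm2 H (A *m y - b))%:E)%E.
Hypothesis lamE :
  forall k, lam k.+1 = lamt k.+1 - (cseq k / (bseq k + 1)) *: (H *m (A *m x k.+1 - b)).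
Hypothesis zE : forall k, z k.+1 = z k - aseq k *: (H *m (A *m x k.+1 - b)).

Let F k := fine (f (x k)).
Let r k := A *m x k - b.
Let gap k := fine (f xs) - F k + inner (lam k) (r k).
Let dist k := mnorm2 (invmx H) (z k - ls).
Let res k := mnorm2 H (r k.+1).
Let energy k := Aseq k * gap k + dist k / 2.

Lemma bseq_ge0 k : 0 <= bseq k.
Proof. by case: k => [|k]; rewrite ?bseq0 // ltW ?bseq_gt0. Qed.

Lemma Aseq_ge0 k : 0 <= Aseq k.
Proof. by rewrite AseqE mulr_ge0 ?bseq_ge0 // ltW. Qed.

Lemma saddle_valueE : f xs = (fine (f xs))%:E.
Proof.
have [f_ninfty [y fy_lt]] := f_proper.
suff /fineK-> : f xs \is a fin_num by [].
rewrite fin_numE f_ninfty /=; apply/eqP => fxs_infty.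
have := saddle.2 y; rewrite /lagrangian fxs_infty addye // leye_eq.
by case: (f y) fy_lt.
Qed.

Lemma saddle_feasible : A *m xs = b.
Proof.
apply/eqP; rewrite -subr_eq0; apply/eqP/inner_self_le0.
have := saddle.1 (ls - (A *m xs - b)).
by rewrite /lagrangian saddle_valueE -!EFinB lee_fin innerBl; lra.
Qed.

Lemma iterateE k : f (x k.+1) = (F k.+1)%:E.
Proof.
have [f_ninfty _] := f_proper.
suff /fineK-> : f (x k.+1) \is a fin_num by [].
rewrite fin_numE f_ninfty /=; apply/eqP => fx_infty.
by have := x_argmin k xs; rewrite fx_infty saddle_valueE !addye.
Qed.

Lemma iterate_optimality k y Fy : f y = Fy%:E ->
  F k.+1 + inner (lam k.+1) (A *m y - A *m x k.+1) <= Fy.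
Proof.
move=> fyE; have [f_ninfty _] := f_proper.
have := penalized_argmin_optimality
  f_convex f_ninfty H_spd.1 (iterateE k) fyE (x_argmin k).
have bk1_neq0 : bseq k + 1 != 0 by rewrite gt_eqF // ltr_wpDl ?bseq_ge0.
suff -> : 2 * (cseq k / (2 * (bseq k + 1))) = cseq k / (bseq k + 1) by rewrite -lamE.
by field.
Qed.

Lemma gap_ge0 k : 0 <= gap k.+1.
Proof.
have := iterate_optimality k saddle_valueE.
by rewrite saddle_feasible -opprB innerNr /gap; lra.
Qed.

Lemma gap_le_dual k : gap k.+1 <= inner (lam k.+1 - ls) (r k.+1).
Proof.
have := saddle.2 (x k.+1).
rewrite /lagrangian saddle_valueE iterateE saddle_feasible subrr inner0r.
by rewrite -!EFinB lee_fin innerBl /gap; lra.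
Qed.

Lemma gap_succ_le k : gap k.+2 <= gap k.+1 + inner (lam k.+2 - lam k.+1) (r k.+2).
Proof.
have := iterate_optimality k (iterateE k.+1).
have -> : A *m x k.+2 - A *m x k.+1 = r k.+2 - r k.+1 by rewrite /r opprB addrA subrK.
by rewrite innerBr innerBl /gap; lra.
Qed.

Lemma dual_update k :
  (bseq k + 1) *: lam k.+1 = z k + bseq k *: lam k - cseq k *: (H *m r k.+1).
Proof.
have bk1_neq0 : bseq k + 1 != 0 by rewrite gt_eqF // ltr_wpDl ?bseq_ge0.
rewrite lamE lamtE !scalerDr scalerN !scalerA mulfV // scale1r.
by rewrite mulrCA mulfV // mulr1 [_ * (_ / _)]mulrCA mulfV // mulr1.
Qed.

Lemma dist_succ k :
  dist k.+1 = dist k - 2 * aseq k * inner (z k - ls) (r k.+1) + aseq k ^+ 2 * res k.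
Proof.
by rewrite /dist zE addrAC mnorm2_invmx_subZ ?H_spd.1 ?spd_unitmx.
Qed.

Lemma energy_step k : energy k.+1 + aseq k ^+ 2 * res k / 2 <= energy k.
Proof.
have b_gap : bseq k * gap k.+1 <= bseq k * (gap k + inner (lam k.+1 - lam k) (r k.+1)).
  by case: k => [|k]; rewrite ?bseq0 ?mul0r // ler_wpM2l ?bseq_ge0 ?gap_succ_le.
have := congr1 (fun u => inner u (r k.+1)) (dual_update k).
rewrite /= innerBl innerDl !innerZl [inner (H *m _) _]innerC -mnorm2E -/(res k) => dualE.
have A_succ : Aseq k.+1 <= aseq k * (bseq k + 1).
  by have := Aseq_succ_le k; rewrite (AseqE k); lra.
have a_gt0 := aseq_gt0 k; have res_ge0 : 0 <= res k := spd_mnorm2_ge0 _ H_spd.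
have := ler_wpM2r (gap_ge0 k) A_succ.
have := ler_wpM2l (ltW a_gt0) b_gap.
have := ler_wpM2l (ltW a_gt0) (gap_le_dual k).
have := ler_wpM2r res_ge0 (ler_wpM2l (ltW a_gt0) (aseq_le_cseq k)).
have := congr1 (fun v => aseq k * v) dualE.
rewrite /energy dist_succ (AseqE k) !innerBl expr2 /=; lra.
Qed.

Lemma energy0 : energy 0 = mnorm2 (invmx H) (lam 0 - ls) / 2.
Proof. by rewrite /energy AseqE bseq0 mulr0 mul0r add0r /dist z0. Qed.

Lemma energy_ge0 k : 0 <= energy k.
Proof.
have dist_ge0 : 0 <= dist k := spd_invmx_mnorm2_ge0 _ H_spd.
suff Agap_ge0 : 0 <= Aseq k * gap k by rewrite addr_ge0 ?divr_ge0.
case: k {dist_ge0} => [|k]; first by rewrite AseqE bseq0 mulr0 mul0r.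
exact: mulr_ge0 (Aseq_ge0 _) (gap_ge0 _).
Qed.

Lemma energy_telescope k :
  energy k + (\sum_(0 <= i < k) aseq i ^+ 2 * res i) / 2 <= energy 0.
Proof.
elim: k => [|k IHk]; first by rewrite big_geq // mul0r addr0.
by rewrite big_nat_recr //= mulrDl; have := energy_step k; lra.
Qed.

Lemma weighted_residual_sum_le k :
  \sum_(0 <= i < k) aseq i ^+ 2 * mnorm2 H (A *m x i.+1 - b)
  <= mnorm2 (invmx H) (lam 0 - ls).
Proof.
have := energy_telescope k; have := energy_ge0 k.
by rewrite energy0 /res /r; lra.
Qed.

Lemma lagrangian_gap_bound k : (1 <= k)%N ->
  (f xs - f (x k) + (inner (lam k) (A *m x k - b))%:E
   <= (mnorm2 (invmx H) (lam 0 - ls) / (2 * Aseq k))%:E)%E.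
Proof.
case: k => [//|k] _.
have Ak_gt0 : 0 < Aseq k.+1 by rewrite AseqE mulr_gt0 ?bseq_gt0.
rewrite saddle_valueE iterateE -EFinB -EFinD lee_fin ler_pdivlMr ?mulr_gt0 //.
have dist_ge0 : 0 <= dist k.+1 := spd_invmx_mnorm2_ge0 _ H_spd.
have res_sum_ge0 : 0 <= \sum_(0 <= i < k.+1) aseq i ^+ 2 * res i.
  by apply: sumr_ge0 => i _; rewrite mulr_ge0 ?sqr_ge0 ?spd_mnorm2_ge0.
by have := energy_telescope k.+1; rewrite energy0 /energy /gap /r; lra.
Qed.

End AcceleratedLagrangian.

Unset Implicit Arguments.

Theorem corollary1 (R : realType) (m n : nat)
  (f : 'cV[R]_n -> \bar R) (Amat : 'M[R]_(m, n)) (b : 'cV[R]_m)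
  (xs : 'cV[R]_n) (ls : 'cV[R]_m) (H : 'M[R]_m)
  (Aseq aseq bseq cseq : nat -> R)
  (x : nat -> 'cV[R]_n) (lam z lamt : nat -> 'cV[R]_m) :
  closed_fun f -> proper_fun f -> convex_fun f ->
  (exists x0, rel_int (dom f) x0 /\ Amat *m x0 = b) ->
  saddle_point f Amat b xs ls ->
  spd H ->
  (forall k, 0 < aseq k) -> (forall k, 0 < cseq k) ->
  (forall k, (1 <= k)%N -> 0 < bseq k) ->
  (forall k, Aseq k.+1 - Aseq k <= aseq k) ->
  (forall k, Aseq k = aseq k * bseq k) ->
  Aseq 0%N = 0 -> bseq 0%N = 0 ->
  (forall k, aseq k <= cseq k) ->
  z 0%N = lam 0%N ->
  (forall k, lamt k.+1 = (bseq k + 1)^-1 *: z k + (bseq k / (bseq k + 1)) *: lam k) ->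
  (forall k (y : 'cV[R]_n),
     (f (x k.+1) - (inner (lamt k.+1) (Amat *m x k.+1 - b))%:E
        + (cseq k / (2 * (bseq k + 1)) * mnorm2 H (Amat *m x k.+1 - b))%:E
      <= f y - (inner (lamt k.+1) (Amat *m y - b))%:E
        + (cseq k / (2 * (bseq k + 1)) * mnorm2 H (Amat *m y - b))%:E)%E) ->
  (forall k, lam k.+1 = lamt k.+1 - (cseq k / (bseq k + 1)) *: (H *m (Amat *m x k.+1 - b))) ->
  (forall k, z k.+1 = z k - aseq k *: (H *m (Amat *m x k.+1 - b))) ->
  (forall k, (1 <= k)%N ->
     (f xs - f (x k) + (inner (lam k) (Amat *m x k - b))%:E
       <= (mnorm2 (invmx H) (lam 0%N - ls) / (2 * Aseq k))%:E)%E) /\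
  (forall k, exists j : nat, (j <= k)%N /\
     mnorm2 H (Amat *m x j.+1 - b)
       <= mnorm2 (invmx H) (lam 0%N - ls) / (\sum_(0 <= i < k.+1) aseq i ^+ 2)).
Proof.
(* Closedness of f and the constraint qualification only serve to guarantee the
   existence of the saddle point and of the minimizers x_{k+1}, which are
   assumed here; c_k > 0 and A_0 = 0 follow from the other hypotheses. *)
move=> _ f_proper f_convex _ saddle H_spd a_gt0 _ b_gt0 A_succ_le AE _ b0 a_le_c z0
  lamtE x_argmin lamE zE.
split=> [k|k].
  by apply: lagrangian_gap_bound; eassumption.
apply: exists_le_weighted_mean => [i|]; first exact: exprn_gt0.
by apply: weighted_residual_sum_le; eassumption.
Qed.
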